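(* Consider the shared-link caching network described in the context, with $m$ files, $n$ users, cache sizes $M_1,\dots,M_n$ and demand distribution $\mathbf{Q}=[q_{f,u}]$. Let $\mathbf{P}=[p_{f,u}]$ be any caching distribution with $0\le M_u p_{f,u}\le 1$ for all $f,u$ and $\sum_{f=1}^m p_{f,u}=1$ for all $u$. Use the random caching algorithm with caching distribution $\mathbf{P}$ and chromatic-number index coding (CIC) delivery, and let $$\bar R(\mathbf{P},\mathbf{Q}) = \lim_{B\to\infty}\mathbb{E}\big[\chi(\mathsf{H}_{\mathsf{C},\mathsf{W}})/B \,\big|\, \mathsf{C}\big],$$ where the expectation is over the random demands only, so that $\bar R(\mathbf{P},\mathbf{Q})$ is a random variable depending on the random caching configuration $\mathsf{C}$. Define $$\bar m=\sum_{f=1}^m \Big(1-\prod_{u=1}^n (1-q_{f,u})\Big),$$ and $$\psi(\mathbf{P},\mathbf{Q})=\sum_{\ell=1}^n\ \sum_{\mathcal{U}^\ell\subset\mathcal{U},\,|\mathcal{U}^\ell|=\ell}\ \sum_{f=1}^m\ \sum_{u\in\mathcal{U}^\ell}\rho_{f,u,\mathcal{U}^\ell}\,\lambda(u,f),$$ where, for a set $\mathcal{U}^\ell$ of $\ell$ users, $u\in\mathcal{U}^\ell$ and a file $f_u$, $$\lambda(u,f_u)=(1-p_{f_u,u}M_u)\prod_{k\in\mathcal{U}^\ell\setminus\{u\}}(p_{f_u,k}M_k)\prod_{k\in\mathcal{U}\setminus\mathcal{U}^\ell}(1-p_{f_u,k}M_k),$$ and $$\rho_{f,u,\mathcal{U}^\ell}=\mathbb{P}\Big(f=\arg\max_{f_u\in\mathbf{f}(\mathcal{U}^\ell)}\lambda(u,f_u)\Big),$$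 the probability (over the random request vector) that $f$ is the file maximizing $\lambda(u,\cdot)$ among $\mathbf{f}(\mathcal{U}^\ell)$, the set of files requested by the users in $\mathcal{U}^\ell$. Then, with high probability, $$\bar R(\mathbf{P},\mathbf{Q})\le \bar R^{\rm ub}(\mathbf{P},\mathbf{Q}):=\min\{\psi(\mathbf{P},\mathbf{Q}),\ \bar m\},$$ where ''with high probability'' means $\lim_{B\to\infty}\mathbb{P}\big(\bar R(\mathbf{P},\mathbf{Q})\le \bar R^{\rm ub}(\mathbf{P},\mathbf{Q})\big)=1$, the probability being over the random caching configuration.
   Context: Network: a source has access to a library $\mathcal{F}=\{1,\dots,m\}$ of $m$ files, each of $F$ bits, and is connected to $n$ users $\mathcal{U}=\{1,\dots,n\}$ through a shared error-free multicast link; rate is measured in units of file size. User $u$ has a cache of $M_uF$ bits ($M_u$ files). User $u$ requests file $f$ with probability $q_{f,u}$ (with $\sum_f q_{f,u}=1$), users' requests being independent; $\mathbf{f}=(f_1,\dots,f_n)$ denotes the random request vector. Each file is split into $B$ equal-size packets. Random caching algorithm with caching distribution $\mathbf{P}$: for each file $f$, each user $u$ independently caches a subset $\mathbf{C}_{u,f}$ of $p_{f,u}M_uB$ distinct packets of file $f$ chosen uniformly at random; $\mathbf{C}$ denotes the resulting (random) caching configuration. $\mathbf{W}$ denotes the packet-level demand: user $u$ requests the packets of file $f_u$ not in its cache. Conflict graph $\mathcal{H}_{\mathbf{C},\mathbf{W}}=(\mathcal{V},\mathcal{E})$: each packet requested by each user is a distinct vertex $v$, identified by its packet identity $\rho(v)$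 and requesting user $\mu(v)$; $v_1$ interferes with $v_2$ if packet $\rho(v_1)$ is not in the cache of user $\mu(v_2)$ and $\rho(v_1),\rho(v_2)$ are not the same packet; there is an undirected edge between $v_1,v_2$ if either interferes with the other. CIC delivery: take a minimum vertex coloring of the conflict graph and transmit, for each color, the modulo sum of the packets with that color; the number of transmissions is the chromatic number $\chi(\mathcal{H}_{\mathbf{C},\mathbf{W}})$, giving rate $\chi/B$. *)

From HB Require Import structures.
From mathcomp Require Import all_boot all_order all_algebra.
From mathcomp Require Import all_classical all_reals all_analysis.
Set Implicit Arguments. Unset Strict Implicit. Unset Printing Implicit Defensive.
Import Order.TTheory GRing.Theory Num.Theory.
Local Open Scope ring_scope.

(* Graph with vertex set V (a subset of a finite type T) and edge relation e
   (loops, if any, are ignored). *)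
Definition colorable (T : finType) (V : {set T}) (e : rel T) (k : nat) : bool :=
  [exists c : {ffun T -> 'I_k},
     [forall x in V, forall y in V, ((x != y) && e x y) ==> (c x != c y)]].

Lemma colorable_card (T : finType) (V : {set T}) (e : rel T) :
  exists k, colorable V e k.
Proof.
exists #|T|; apply/existsP; exists [ffun x => enum_rank x].
apply/forallP => x; apply/implyP => _; apply/forallP => y; apply/implyP => _.
apply/implyP => /andP[nxy _]; rewrite !ffunE.
by apply: contra nxy => /eqP /enum_rank_inj ->.
Qed.

Definition chromatic (T : finType) (V : {set T}) (e : rel T) : nat :=
  ex_minn (colorable_card V e).

Section Caching.
Variables (R : realType) (m n : nat).
Variables (M : 'I_n -> R) (q p : 'I_m -> 'I_n -> R).

(* number of packets of file f cached by user u when files have B packets: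
   p_{f,u} M_u B (rounded down when it is not an integer) *)
Definition ncached (B : nat) (f : 'I_m) (u : 'I_n) : nat :=
  Num.truncn (p f u * M u * B%:R).

(* caching configuration: C u f = set of packets of file f cached by user u *)
Definition config (B : nat) := {ffun 'I_n -> {ffun 'I_m -> {set 'I_B}}}.

(* probability of configuration C under the random caching algorithm:
   independently for each (u,f), a uniformly random subset of size
   ncached B f u *)
Definition cache_prob (B : nat) (C : config B) : R :=
  \prod_(u : 'I_n) \prod_(f : 'I_m)
     ((#|C u f| == ncached B f u)%:R / ('C(B, ncached B f u))%:R).

Definition demand := {ffun 'I_n -> 'I_m}.
Definition demand_prob (d : demand) : R := \prod_(u : 'I_n) q (d u) u.

(* conflict graph H_{C,W}: vertex (u,j) = packet j of file d u requested by
   user u (i.e. not in its cache); packet identity rho(u,j) = (d u, j),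
   requesting user mu(u,j) = u *)
Definition cg_vertices (B : nat) (C : config B) (d : demand) : {set 'I_n * 'I_B} :=
  [set v | v.2 \notin C v.1 (d v.1)].

Definition cg_interferes (B : nat) (C : config B) (d : demand)
  (v1 v2 : 'I_n * 'I_B) : bool :=
  (v1.2 \notin C v2.1 (d v1.1)) && ((d v1.1, v1.2) != (d v2.1, v2.2)).

Definition cg_edge (B : nat) (C : config B) (d : demand) : rel ('I_n * 'I_B) :=
  fun v1 v2 => (v1 != v2) && (cg_interferes C d v1 v2 || cg_interferes C d v2 v1).

Definition cic_transmissions (B : nat) (C : config B) (d : demand) : nat :=
  chromatic (cg_vertices C d) (cg_edge C d).

Definition cond_rate (B : nat) (C : config B) : R :=
  \sum_(d : demand) demand_prob d * ((cic_transmissions C d)%:R / B%:R).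

Definition mbar : R := \sum_(f : 'I_m) (1 - \prod_(u : 'I_n) (1 - q f u)).

Definition lambda (U : {set 'I_n}) (u : 'I_n) (f : 'I_m) : R :=
  (1 - p f u * M u) * (\prod_(k in U :\ u) (p f k * M k))
  * (\prod_(k in ~: U) (1 - p f k * M k)).

Definition requested (U : {set 'I_n}) (d : demand) : {set 'I_m} :=
  [set d k | k in U].

(* f = argmax_{g in f(U)} lambda(u,g), ties broken towards the smallest index *)
Definition is_argmax (U : {set 'I_n}) (u : 'I_n) (d : demand) (f : 'I_m) : bool :=
  [&& f \in requested U d,
      [forall g in requested U d, lambda U u g <= lambda U u f] &
      [forall g in requested U d, (g < f)%N ==> (lambda U u g < lambda U u f)]].

Definition rho (f : 'I_m) (u : 'I_n) (U : {set 'I_n}) : R :=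
  \sum_(d : demand) demand_prob d * (is_argmax U u d f)%:R.

Definition psi : R :=
  \sum_(1 <= l < n.+1) \sum_(U : {set 'I_n} | #|U| == l)
    \sum_(f : 'I_m) \sum_(u in U) rho f u U * lambda U u f.

Definition Rub : R := Order.min psi mbar.

Definition prob_rate_within (eps : R) (B : nat) : R :=
  \sum_(C : config B) cache_prob C * ((cond_rate C <= Rub + eps)%R)%:R.

End Caching.

From HB Require Import structures.
From mathcomp Require Import all_boot all_order all_algebra.
From mathcomp Require Import all_classical all_reals all_analysis.
From mathcomp Require Import lra.
Import Order.TTheory GRing.Theory Num.Theory.
Import numFieldNormedType.Exports.

Set Implicit Arguments.
Unset Strict Implicit.
Unset Printing Implicit Defensive.
Local Open Scope ring_scope.

(* Only configurations in which user u caches exactly ncached B f u packets of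
   each file f have positive probability; for such a configuration two
   colourings of the conflict graph bound its chromatic number.  Giving every
   vertex its own colour yields chi <= sum_u (B - |C_{u,f_u}|) + 1, whose
   average over the demands is sum_u sum_f q_{f,u} (1 - p_{f,u} M_u) + O(1/B);
   this is at most psi because sum_{U containing u} lambda(u,f) = 1 - p_{f,u} M_u
   and rho selects the maximiser of lambda among the requested files.
   Colouring a vertex by its packet identity yields chi <= B |f(U)| + 1, whose
   average is mbar + 1/B.  Hence for B large every configuration of positive
   probability satisfies the bound, and the probability tends to 1. *)

Lemma chromatic_le_card_imset (T K : finType) (V : {set T}) (e : rel T) (g : T -> K) :
  (forall x y, x \in V -> y \in V -> x != y -> e x y -> g x != g y) ->
  (chromatic V e <= #|g @: V|.+1)%N.
Proof.
move=> g_proper; rewrite /chromatic; case: ex_minnP => k _; apply.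
apply/existsP; exists [ffun x => inord (index (g x) (enum (g @: V)))].
apply/forallP => x; apply/implyP => xV; apply/forallP => y; apply/implyP => yV.
apply/implyP => /andP[nxy exy]; rewrite !ffunE.
have gV z : z \in V -> g z \in enum (g @: V) by rewrite mem_enum; apply: imset_f.
apply: contra (g_proper x y xV yV nxy exy) => /eqP/(congr1 val) /=.
rewrite !inordK ?ltnS ?cardE ?index_size // => eq_index.
by rewrite -(nth_index (g x) (gV x xV)) eq_index nth_index ?gV.
Qed.

Lemma sum_set_prod (R : comNzRingType) (T : finType) (c : T -> bool -> R) :
  \sum_(U : {set T}) \prod_(k : T) c k (k \in U) = \prod_(k : T) (c k true + c k false).
Proof.
under [RHS]eq_bigr do rewrite -big_bool.
rewrite bigA_distr_bigA (reindex (fun g : {ffun T -> bool} => [set k | g k])) /=.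
  by apply: eq_bigr => g _; apply: eq_bigr => k _; rewrite inE.
exists (fun U : {set T} => [ffun k => k \in U]) => [g _ | U _].
  by apply/ffunP => k; rewrite ffunE inE.
by apply/setP => k; rewrite inE ffunE.
Qed.

Lemma natr_div_le (R : realFieldType) (eps : R) (k B : nat) : 0 < eps ->
  k%:R / eps < B%:R -> (0 < B)%N /\ k%:R / B%:R <= eps.
Proof.
move=> eps_gt0 ltB.
have B_gt0 : (0 : R) < B%:R by apply: le_lt_trans ltB; rewrite divr_ge0 // ltW.
split; first by rewrite ltr0n in B_gt0.
by rewrite ler_pdivrMr // mulrC -ler_pdivrMr // ltW.
Qed.

Section CachingBounds.
Variables (R : realType) (m n : nat) (M : 'I_n -> R) (q p : 'I_m -> 'I_n -> R).
Hypothesis q_ge0 : forall f u, 0 <= q f u.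
Hypothesis sum_q : forall u, \sum_(f : 'I_m) q f u = 1.
Hypothesis Mp_bounds : forall f u, 0 <= M u * p f u <= 1.

Lemma sum_demand_prod (F : 'I_n -> 'I_m -> R) :
  \sum_(d : demand m n) \prod_(v : 'I_n) F v (d v) = \prod_(v : 'I_n) \sum_(f : 'I_m) F v f.
Proof. by rewrite bigA_distr_bigA. Qed.

Lemma demand_prob_ge0 (d : demand m n) : 0 <= demand_prob q d.
Proof. exact: prodr_ge0. Qed.

Lemma sum_demand_prob : \sum_(d : demand m n) demand_prob q d = 1.
Proof. by rewrite /demand_prob (sum_demand_prod (fun v f => q f v)) big1. Qed.

Lemma sum_demand_prob_marginal (u : 'I_n) (h : 'I_m -> R) :
  \sum_(d : demand m n) demand_prob q d * h (d u) = \sum_(f : 'I_m) q f u * h f.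
Proof.
pose F v f := if v == u then q f u * h f else q f v.
transitivity (\sum_(d : demand m n) \prod_(v : 'I_n) F v (d v)).
  apply: eq_bigr => d _; rewrite /demand_prob (bigD1 u) //= [RHS](bigD1 u) //=.
  rewrite /F eqxx mulrAC; congr (_ * _); apply: eq_bigr => v /negbTE ->//.
rewrite sum_demand_prod (bigD1 u) //= /F eqxx.
rewrite [X in _ * X]big1 ?mulr1 // => v /negbTE vu.
by under eq_bigr do rewrite vu; apply: sum_q.
Qed.

Lemma expected_card_requested :
  \sum_(d : demand m n) demand_prob q d * #|requested [set: 'I_n] d|%:R = mbar q.
Proof.
rewrite /mbar; transitivity (\sum_(f : 'I_m) \sum_(d : demand m n)
   demand_prob q d * (f \in requested [set: 'I_n] d)%:R).
  rewrite exchange_big; apply: eq_bigr => d _; rewrite -mulr_sumr -natr_sum.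
  by rewrite -sum1_card big_mkcond.
apply: eq_bigr => f _.
have mem_requested d : (f \in requested [set: 'I_n] d)%:R =
    1 - \prod_(v : 'I_n) (d v != f)%:R :> R.
  case: (boolP (f \in _)) => [/imsetP[u _ ->] | f_absent].
    by rewrite (bigD1 u) //= eqxx mul0r subr0.
  rewrite big1 ?subrr // => v _; suff -> : d v != f by [].
  by apply: contra f_absent => /eqP <-; apply: imset_f.
under eq_bigr do rewrite mem_requested mulrBr mulr1 /demand_prob -big_split /=.
rewrite sumrB -/(demand_prob q) sum_demand_prob; congr (_ - _).
rewrite (sum_demand_prod (fun v g => q g v * (g != f)%:R)); apply: eq_bigr => v _.
rewrite -[X in _ = X - _](sum_q v) [in RHS](bigD1 f) //= addrAC subrr add0r.
by rewrite [LHS](bigD1 f) //= eqxx mulr0 add0r; apply: eq_bigr => g ->; rewrite mulr1.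
Qed.

Lemma lambda_ge0 (U : {set 'I_n}) (u : 'I_n) (f : 'I_m) : 0 <= lambda M p U u f.
Proof.
have pM_bounds k : 0 <= p f k * M k <= 1 by rewrite mulrC.
rewrite /lambda !mulr_ge0 //.
- by case/andP: (pM_bounds u) => _; rewrite subr_ge0.
- by apply: prodr_ge0 => k _; case/andP: (pM_bounds k).
- by apply: prodr_ge0 => k _; case/andP: (pM_bounds k) => _; rewrite subr_ge0.
Qed.

Lemma sum_lambda (u : 'I_n) (f : 'I_m) :
  \sum_(U : {set 'I_n} | u \in U) lambda M p U u f = 1 - p f u * M u.
Proof.
pose a k := p f k * M k.
pose c k (b : bool) := if k == u then (if b then 1 - a u else 0)
                       else (if b then a k else 1 - a k).
have := @sum_set_prod _ _ c.
rewrite (bigD1 u) //= [X in _ * X]big1 => [|k /negbTE ku]; last first.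
  by rewrite /c ku addrC subrK.
rewrite /c eqxx addr0 mulr1 => <-.
rewrite [RHS](bigID (fun U : {set 'I_n} => u \in U)) /= [X in _ = _ + X]big1 ?addr0.
  apply: eq_bigr => U uU; rewrite (bigD1 u) //= /c eqxx uU /lambda -mulrA.
  congr (_ * _); rewrite [RHS](bigID (mem U)) /=; congr (_ * _).
    apply: eq_big => [k|k]; first by rewrite in_setD1 andbC.
    by rewrite in_setD1 => /andP[/negbTE -> ->].
  apply: eq_big => [k|k]; rewrite finset.in_setC.
    by case: eqP => [->|]; rewrite ?uU.
  by move=> kU; rewrite (negbTE kU); case: eqP kU => // ->; rewrite uU.
by move=> U /negbTE uU; apply/eqP/prodf_eq0; exists u; rewrite // /c eqxx uU.
Qed.

Lemma is_argmax_exists (U : {set 'I_n}) (u : 'I_n) (d : demand m n) : u \in U ->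
  exists2 f, is_argmax M p U u d f & lambda M p U u (d u) <= lambda M p U u f.
Proof.
move=> uU; set A := requested U d; set L := lambda M p U u.
have duA : d u \in A by apply: imset_f.
have [g gA g_max] := @extremumP R _ (fun x y => y <= x) (d u) (mem A) L lexx
   (fun x y z h1 h2 => le_trans h2 h1) (fun x y => le_total y x) duA.
pose S := [pred f | (f \in A) && (L g <= L f)].
have gS : S g by apply/andP.
have [f /andP[fA Lgf] f_min] := arg_minnP (fun f : 'I_m => val f) gS.
have f_max h : h \in A -> L h <= L f by move=> hA; apply: le_trans (g_max h hA) Lgf.
exists f; last exact: f_max.
rewrite /is_argmax fA /=; apply/andP; split; apply/forallP => h; apply/implyP => hA.
  exact: f_max.
apply/implyP => hf; rewrite lt_def f_max // andbT; apply/negP => /eqP Lhf.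
have hS : S h by apply/andP; split; last by rewrite /L -Lhf.
by have := f_min h hS; rewrite leqNgt hf.
Qed.

Lemma expected_lambda_le_rho (U : {set 'I_n}) (u : 'I_n) : u \in U ->
  \sum_(d : demand m n) demand_prob q d * lambda M p U u (d u)
  <= \sum_(f : 'I_m) rho M q p f u U * lambda M p U u f.
Proof.
move=> uU; rewrite /rho.
under [X in _ <= X]eq_bigr do rewrite mulr_suml.
rewrite exchange_big /=; apply: ler_sum => d _.
under [X in _ <= X]eq_bigr do rewrite -mulrA.
rewrite -mulr_sumr ler_wpM2l ?demand_prob_ge0 //.
have [f f_argmax le_f] := is_argmax_exists d uU.
rewrite (bigD1 f) //= f_argmax mul1r; apply: le_trans le_f _.
by rewrite lerDl sumr_ge0 // => g _; rewrite mulr_ge0 ?lambda_ge0.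
Qed.

Lemma psi_sum_sets : psi M q p =
  \sum_(U : {set 'I_n}) \sum_(u in U) \sum_(f : 'I_m) rho M q p f u U * lambda M p U u f.
Proof.
rewrite /psi.
under eq_bigr do under eq_bigr do rewrite exchange_big /=.
under eq_bigr do rewrite big_mkcond /=.
rewrite exchange_big /=; apply: eq_bigr => U _.
have [->|[u uU]] := set_0Vmem U; first by rewrite big_set0; apply: big1 => l _; case: ifP.
rewrite -big_mkcond /=; under eq_bigl do rewrite eq_sym.
rewrite big_nat1_eq ifT // card_gt0 ltnS -[n in (_ <= n)%N]card_ord max_card andbT.
by apply/set0Pn; exists u.
Qed.

Lemma uncoded_rate_le_psi :
  \sum_(u : 'I_n) \sum_(f : 'I_m) q f u * (1 - p f u * M u) <= psi M q p.
Proof.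
rewrite psi_sum_sets; apply: (@le_trans _ _ (\sum_(U : {set 'I_n}) \sum_(u in U)
   \sum_(d : demand m n) demand_prob q d * lambda M p U u (d u))); last first.
  by apply: ler_sum => U _; apply: ler_sum => u uU; apply: expected_lambda_le_rho.
rewrite le_eqVlt; apply/orP; left; apply/eqP.
under eq_bigr => u _ do rewrite -(sum_demand_prob_marginal u (fun f => 1 - p f u * M u)).
rewrite [RHS](exchange_big_dep predT) //=; apply: eq_bigr => u _.
rewrite [RHS]exchange_big; apply: eq_bigr => d _.
by rewrite -sum_lambda mulr_sumr.
Qed.

Section Configuration.
Variables (B : nat) (C : config m n B).

Lemma cic_le_card_vertices (d : demand m n) :
  (cic_transmissions C d <= #|cg_vertices C d|.+1)%N.
Proof.
apply: leq_trans (@chromatic_le_card_imset _ _ _ _ id _) _ => //.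
by rewrite ltnS leq_imset_card.
Qed.

(* Adjacent vertices always carry distinct packets, so the packet identity is a
   proper colouring with at most B |f(U)| colours. *)
Lemma cic_le_card_requested (d : demand m n) :
  (cic_transmissions C d <= (#|requested [set: 'I_n] d| * B).+1)%N.
Proof.
apply: leq_trans (@chromatic_le_card_imset _ _ _ _ (fun v => (d v.1, v.2)) _) _.
  by move=> x y _ _ _ /andP[_ /orP[/andP[_ ?]|/andP[_]]]; rewrite // eq_sym.
rewrite ltnS -[X in (_ <= _ * X)%N](card_ord B) -cardsT -cardsX subset_leq_card //.
by apply/fintype.subsetP => _ /imsetP[v _ ->]; rewrite !inE andbT; apply: imset_f.
Qed.

Lemma card_cg_vertices (d : demand m n) :
  #|cg_vertices C d| = (\sum_(u : 'I_n) (B - #|C u (d u)|))%N.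
Proof.
rewrite -sum1_card big_mkcond /=; transitivity
  (\sum_(u : 'I_n) \sum_(j : 'I_B) if (u, j) \in cg_vertices C d then 1 else 0)%N.
  by rewrite pair_big /=; apply: eq_bigr => -[u j].
apply: eq_bigr => u _; rewrite -big_mkcond /=.
rewrite (eq_bigl (mem (~: C u (d u)))) => [|j]; last by rewrite !inE.
by rewrite sum1_card cardsCs finset.setCK card_ord.
Qed.

Lemma cond_rate_le_mbar : (0 < B)%N -> cond_rate q C <= mbar q + B%:R^-1.
Proof.
move=> B_gt0; have B_neq0 : B%:R != 0 :> R by rewrite pnatr_eq0 -lt0n.
apply: (le_trans (y := \sum_(d : demand m n)
  demand_prob q d * (#|requested [set: 'I_n] d|%:R + B%:R^-1))).
  apply: ler_sum => d _; rewrite ler_wpM2l ?demand_prob_ge0 // ler_pdivrMr ?ltr0n //.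
  by rewrite mulrDl mulVf // -natrM natr1 ler_nat cic_le_card_requested.
under eq_bigr do rewrite mulrDr.
by rewrite big_split /= -mulr_suml sum_demand_prob mul1r expected_card_requested.
Qed.

Lemma uncached_fraction_le (f : 'I_m) (u : 'I_n) : (0 < B)%N ->
  (B%:R - (ncached M p B f u)%:R) / B%:R <= 1 - p f u * M u + B%:R^-1.
Proof.
move=> B_gt0; have B_gt0' : (0 : R) < B%:R by rewrite ltr0n.
have := truncnS_gt (p f u * M u * B%:R); rewrite -natr1 /ncached => trunc_gt.
rewrite ler_pdivrMr // mulrDl mulrBl mul1r mulVf ?gt_eqF //; lra.
Qed.

Hypothesis C_uniform : forall u f, #|C u f| = ncached M p B f u.

Lemma cic_rate_le_uncoded (d : demand m n) : (0 < B)%N ->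
  (cic_transmissions C d)%:R / B%:R
  <= \sum_(u : 'I_n) (1 - p (d u) u * M u + B%:R^-1) + B%:R^-1.
Proof.
move=> B_gt0; apply: (le_trans (y := #|cg_vertices C d|.+1%:R / B%:R)).
  by rewrite ler_wpM2r ?invr_ge0 ?ler0n // ler_nat cic_le_card_vertices.
rewrite -natr1 mulrDl mul1r card_cg_vertices natr_sum mulr_suml lerD2r.
apply: ler_sum => u _.
rewrite natrB ?C_uniform; last by rewrite -C_uniform (leq_trans (max_card _)) ?card_ord.
exact: uncached_fraction_le.
Qed.

Lemma cond_rate_le_uncoded : (0 < B)%N ->
  cond_rate q C <= \sum_(u : 'I_n) \sum_(f : 'I_m) q f u * (1 - p f u * M u)
                   + n.+1%:R / B%:R.
Proof.
move=> B_gt0; pose h u f := 1 - p f u * M u + B%:R^-1.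
apply: (le_trans (y := \sum_(d : demand m n)
  demand_prob q d * (\sum_(u : 'I_n) h u (d u) + B%:R^-1))).
  by apply: ler_sum => d _; rewrite ler_wpM2l ?demand_prob_ge0 ?cic_rate_le_uncoded.
under eq_bigr do rewrite mulrDr mulr_sumr.
rewrite big_split /= -mulr_suml sum_demand_prob mul1r exchange_big /=.
under eq_bigr => u _ do rewrite (sum_demand_prob_marginal u (h u)).
under eq_bigr => u _ do rewrite /h (eq_bigr _ (fun f _ => mulrDr _ _ _)) big_split /=
  -mulr_suml sum_q mul1r.
by rewrite big_split /= sumr_const card_ord -addrA -natr1 mulrDl mul1r mulr_natl.
Qed.

Lemma cond_rate_le_Rub : (0 < B)%N -> cond_rate q C <= Rub M q p + n.+1%:R / B%:R.
Proof.
move=> B_gt0; rewrite -lerBlDr le_min !lerBlDr; apply/andP; split.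
  by rewrite (le_trans (cond_rate_le_uncoded B_gt0)) // lerD2r uncoded_rate_le_psi.
rewrite (le_trans (cond_rate_le_mbar B_gt0)) // lerD2l -[X in X <= _]mul1r.
by rewrite ler_wpM2r ?invr_ge0 ?ler0n ?ler1n.
Qed.

End Configuration.

Lemma ncached_le (B : nat) (f : 'I_m) (u : 'I_n) : (ncached M p B f u <= B)%N.
Proof.
rewrite /ncached truncn_le_nat -natr1.
have := Mp_bounds f u; rewrite mulrC => /andP[pM_ge0 pM_le1].
have : (0 : R) <= B%:R by rewrite ler0n.
nra.
Qed.

Lemma sum_cache_prob (B : nat) : \sum_(C : config m n B) cache_prob M p C = 1.
Proof.
rewrite /cache_prob -(bigA_distr_bigA (fun u (Cu : {ffun 'I_m -> {set 'I_B}}) =>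
   \prod_(f : 'I_m) ((#|Cu f| == ncached M p B f u)%:R / 'C(B, ncached M p B f u)%:R : R))).
apply: big1 => u _; rewrite -(bigA_distr_bigA (fun f (S : {set 'I_B}) =>
   ((#|S| == ncached M p B f u)%:R / 'C(B, ncached M p B f u)%:R : R))).
apply: big1 => f _; set k := ncached M p B f u.
have card_k : #|[pred S : {set 'I_B} | #|S| == k]| = 'C(B, k).
  by rewrite -[X in 'C(X, _)](card_ord B) -card_draws; apply: eq_card => S; rewrite !inE.
rewrite -mulr_suml -natr_sum -big_mkcond /= sum1_card card_k.
by rewrite mulfV // pnatr_eq0 -lt0n bin_gt0 ncached_le.
Qed.

Lemma cache_prob_neq0 (B : nat) (C : config m n B) :
  cache_prob M p C != 0 -> forall u f, #|C u f| = ncached M p B f u.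
Proof.
move=> C_neq0 u f; apply/eqP; apply: contra_neqT C_neq0 => C_bad.
by rewrite /cache_prob (bigD1 u) //= (bigD1 f) //= (negbTE C_bad) !mul0r.
Qed.

Lemma prob_rate_within_eq1 (eps : R) (B : nat) : 0 < eps ->
  n.+1%:R / eps < B%:R -> prob_rate_within M q p eps B = 1.
Proof.
move=> eps_gt0 /(natr_div_le eps_gt0) [B_gt0 small_B].
rewrite /prob_rate_within -[RHS](sum_cache_prob B); apply: eq_bigr => C _.
have [->|/cache_prob_neq0 C_uniform] := eqVneq (cache_prob M p C) 0; first by rewrite mul0r.
rewrite (_ : cond_rate q C <= _) ?mulr1 //.
by rewrite (le_trans (cond_rate_le_Rub C_uniform B_gt0)) // lerD2l.
Qed.

End CachingBounds.

Local Open Scope classical_set_scope.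

Theorem theorem1 (R : realType) (m n : nat) (M : 'I_n -> R)
  (q p : 'I_m -> 'I_n -> R)
  (HM : forall u, 0 <= M u)
  (Hq0 : forall f u, 0 <= q f u)
  (Hq1 : forall u, \sum_(f : 'I_m) q f u = 1)
  (Hp : forall f u, 0 <= M u * p f u <= 1)
  (Hp1 : forall u, \sum_(f : 'I_m) p f u = 1) :
  forall eps : R, 0 < eps ->
    (fun B : nat => prob_rate_within M q p eps B) @ \oo --> (1 : R).
Proof.
move=> eps eps_gt0; apply: cvg_near_cst.
near=> B; apply: (prob_rate_within_eq1 Hq0 Hq1 Hp eps_gt0).
by near: B; apply: nbhs_infty_gtr.
Unshelve. all: by end_near.
Qed.
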